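(* Let $N\ge1$ and let $G$ be the graph consisting of a 5-cycle $C$ together with, for each of the $\binom{5}{3}=10$ triples $S$ of cycle vertices, a set of $N$ new vertices each adjacent exactly to the three vertices of $S$ (so $n=10N+5$). Let $F$ be uniform on $[0,1]$ and $p\in(0,1)$. Then $\mathcal{N}_{p\cdot\mathbf{1}}$ contains an equilibrium with revenue $5p(1-p^{1/3})$ and an equilibrium with revenue $(N+2)p(1-p)$. Consequently, for every fixed $p\in(0,1)$ the ratio between the best and worst equilibrium revenue at price $p$ is $\Omega(n)$.
   Context: Public-goods pricing game: $n$ buyers are the vertices of an undirected graph $G=([n],E)$; $N(i)=\{j:(i,j)\in E\}$ (so $i\notin N(i)$). Values i.i.d. uniform on $[0,1]$, $F(x)=\min\{1,x\}$ for $x\ge0$, $F(\infty)=1$. An equilibrium for price vector $\mathbf{p}$ is $\mathbf{T}\in[0,\infty]^n$ (buyer $i$ purchases iff $v_i\ge T_i$) with $T_i=p_i/\prod_{j\in N(i)}F(T_j)$ for all $i$ (convention $c/0=\infty$); $\mathcal{N}_{\mathbf{p}}$ is the set of equilibria; $\mathcal{R}(\mathbf{p},\mathbf{T})=\sum_ip_i(1-F(T_i))$; $p\cdot\mathbf{1}$ is the uniform price vector. *)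

From Stdlib Require Import Reals List Arith.
Import ListNotations.
Open Scope R_scope.

Inductive ereal := Fin (x : R) | Inf.

Definition ereal_nonneg (t : ereal) : Prop :=
  match t with Fin x => 0 <= x | Inf => True end.

Definition Funif (t : ereal) : R :=
  match t with Fin x => Rmin 1 x | Inf => 1 end.

Definition ediv (c d : R) : ereal :=
  if Req_EM_T d 0 then Inf else Fin (c / d).

(* An undirected graph on vertex set [n] = {0,...,n-1}. *)
Record graph := Graph { nv : nat; adj : nat -> nat -> bool }.

Definition nbrs (g : graph) (i : nat) : list nat :=
  filter (adj g i) (seq 0 (nv g)).

Definition prodF (g : graph) (T : nat -> ereal) (i : nat) : R :=
  fold_right Rmult 1 (map (fun j => Funif (T j)) (nbrs g i)).

Definition is_equilibrium (g : graph) (p : nat -> R) (T : nat -> ereal) : Prop :=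
  forall i, (i < nv g)%nat ->
    ereal_nonneg (T i) /\ T i = ediv (p i) (prodF g T i).

Definition revenue (g : graph) (p : nat -> R) (T : nat -> ereal) : R :=
  fold_right Rplus 0 (map (fun i => p i * (1 - Funif (T i))) (seq 0 (nv g))).

Definition uniform_price (p : R) : nat -> R := fun _ => p.

(* The specific graph: vertices 0..4 form the 5-cycle C; vertex 5 + m
   (0 <= m < 10N) is a new vertex attached to the triple number (m mod 10),
   so each of the 10 triples gets exactly N new vertices. *)
Definition triples : list (list nat) :=
  [[0;1;2]; [0;1;3]; [0;1;4]; [0;2;3]; [0;2;4];
   [0;3;4]; [1;2;3]; [1;2;4]; [1;3;4]; [2;3;4]]%nat.

Definition in_triple (i t : nat) : bool := existsb (Nat.eqb i) (nth t triples []).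

Definition cyc_adj (i j : nat) : bool :=
  (Nat.eqb j ((i + 1) mod 5) || Nat.eqb i ((j + 1) mod 5))%bool.

Definition Gadj (u v : nat) : bool :=
  if (Nat.ltb u 5) then
    (if Nat.ltb v 5 then cyc_adj u v else in_triple u ((v - 5) mod 10))
  else
    (if Nat.ltb v 5 then in_triple v ((u - 5) mod 10) else false).

Definition Gcyc (N : nat) : graph := Graph (10 * N + 5) Gadj.

(* Every threshold profile used here is block-periodic: the five cycle vertices
   get thresholds c 0, ..., c 4, and a new vertex 5 + m gets the value d r of
   its triple r = m mod 10.  Since the graph itself has the same period 10 on
   the new vertices, the product of neighbour CDFs and the revenue both reduce
   to finite expressions over 5 + 10 "representative" vertices, with the
   contribution of the new vertices raised to the power N (products) or
   multiplied by N (sums).  Hence a periodic profile is an equilibrium as soon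
   as 15 scalar fixed-point equations hold ([periodic_equilibrium]).

   Writing q for the cube root of p, profile A sets every cycle threshold to q
   and every new threshold to 1 (revenue 5p(1-q)); profile B lets cycle
   vertices 0, 2 and the N new vertices attached to {1,3,4} buy at threshold
   p, everybody else being priced out (revenue (N+2)p(1-p)).  The Omega(n)
   ratio follows since n = 10N + 5 is linear in N. *)

From Stdlib Require Import Reals List Arith Lia Lra.
Open Scope R_scope.

Definition prodl (l : list R) : R := fold_right Rmult 1 l.
Definition suml (l : list R) : R := fold_right Rplus 0 l.

Lemma prodl_app (l1 l2 : list R) : prodl (l1 ++ l2) = prodl l1 * prodl l2.
Proof. induction l1 as [|x l IH]; simpl; [ring|]. unfold prodl in *; rewrite IH; ring. Qed.

Lemma suml_app (l1 l2 : list R) : suml (l1 ++ l2) = suml l1 + suml l2.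
Proof. induction l1 as [|x l IH]; simpl; [ring|]. unfold suml in *; rewrite IH; ring. Qed.

Lemma prodl_filter {A : Type} (a : A -> bool) (g : A -> R) (l : list A) :
  prodl (map g (filter a l)) = prodl (map (fun j => if a j then g j else 1) l).
Proof.
  induction l as [|x l IH]; simpl; auto.
  destruct (a x); unfold prodl in *; simpl; rewrite IH; ring.
Qed.

Lemma periodic_block (A : Type) (f : nat -> A) (s k : nat) :
  (forall j, (s <= j)%nat -> f (j + 10)%nat = f j) ->
  map f (seq (s + 10) k) = map f (seq s k).
Proof.
  revert s; induction k as [|k IH]; intros s Hf; [reflexivity|].
  simpl. rewrite (Nat.add_comm s 10) at 1. rewrite (Nat.add_comm 10 s), Hf by lia.
  f_equal. apply (IH (S s)). intros j Hj; apply Hf; lia.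
Qed.

Lemma prodl_periodic (f : nat -> R) (N s : nat) :
  (forall j, (s <= j)%nat -> f (j + 10)%nat = f j) ->
  prodl (map f (seq s (10 * N))) = prodl (map f (seq s 10)) ^ N.
Proof.
  revert s; induction N as [|N IH]; intros s Hf; [reflexivity|].
  replace (10 * S N)%nat with (10 + 10 * N)%nat by lia.
  rewrite seq_app, map_app, prodl_app, IH by (intros j Hj; apply Hf; lia).
  rewrite periodic_block by auto. reflexivity.
Qed.

Lemma suml_periodic (f : nat -> R) (N s : nat) :
  (forall j, (s <= j)%nat -> f (j + 10)%nat = f j) ->
  suml (map f (seq s (10 * N))) = INR N * suml (map f (seq s 10)).
Proof.
  revert s; induction N as [|N IH]; intros s Hf; [simpl; ring|].
  replace (10 * S N)%nat with (10 + 10 * N)%nat by lia.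
  rewrite seq_app, map_app, suml_app, IH by (intros j Hj; apply Hf; lia).
  rewrite periodic_block by auto. rewrite S_INR. ring.
Qed.

Lemma triple_index_periodic (j : nat) : (5 <= j)%nat ->
  ((j + 10 - 5) mod 10 = (j - 5) mod 10)%nat.
Proof.
  intros Hj. replace (j + 10 - 5)%nat with ((j - 5) + 1 * 10)%nat by lia.
  apply Nat.Div0.mod_add.
Qed.

Lemma ltb_5_false (j : nat) : (5 <= j)%nat -> Nat.ltb j 5 = false.
Proof. intros; apply Nat.ltb_ge; lia. Qed.

Lemma Gadj_periodic (i j : nat) : (5 <= j)%nat -> Gadj i (j + 10) = Gadj i j.
Proof.
  intros Hj. unfold Gadj. rewrite (ltb_5_false j), (ltb_5_false (j + 10)), triple_index_periodic by lia.
  reflexivity.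
Qed.

Definition periodic_profile (c d : nat -> ereal) (j : nat) : ereal :=
  if Nat.ltb j 5 then c j else d ((j - 5) mod 10)%nat.

Lemma periodic_profile_periodic (c d : nat -> ereal) (j : nat) :
  (5 <= j)%nat -> periodic_profile c d (j + 10) = periodic_profile c d j.
Proof.
  intros Hj. unfold periodic_profile.
  rewrite (ltb_5_false j), (ltb_5_false (j + 10)), triple_index_periodic by lia. reflexivity.
Qed.

Lemma vertices_split (N : nat) : seq 0 (nv (Gcyc N)) = seq 0 5 ++ seq 5 (10 * N).
Proof. change (nv (Gcyc N)) with (10 * N + 5)%nat. rewrite Nat.add_comm. apply (seq_app 5). Qed.

Lemma prodF_periodic (N : nat) (c d : nat -> ereal) (i : nat) :
  let f := fun j => if Gadj i j then Funif (periodic_profile c d j) else 1 in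
  prodF (Gcyc N) (periodic_profile c d) i =
  prodl (map f (seq 0 5)) * prodl (map f (seq 5 10)) ^ N.
Proof.
  intros f. unfold prodF, nbrs. change (fold_right Rmult 1 ?l) with (prodl l).
  rewrite prodl_filter, vertices_split, map_app, prodl_app, prodl_periodic; [reflexivity|].
  intros j Hj. unfold f. simpl adj. rewrite Gadj_periodic, periodic_profile_periodic by lia. reflexivity.
Qed.

Lemma prodF_cycle_vertex (N : nat) (c d : nat -> ereal) (i : nat) : (i < 5)%nat ->
  prodF (Gcyc N) (periodic_profile c d) i =
  prodl (map (fun j => if cyc_adj i j then Funif (c j) else 1) (seq 0 5)) *
  prodl (map (fun r => if in_triple i r then Funif (d r) else 1) (seq 0 10)) ^ N.
Proof.
  intros Hi. rewrite prodF_periodic.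
  unfold Gadj, periodic_profile. apply Nat.ltb_lt in Hi. rewrite Hi.
  destruct i as [|[|[|[|[|i]]]]]; try reflexivity; apply Nat.ltb_lt in Hi; lia.
Qed.

Lemma prodF_new_vertex (N : nat) (c d : nat -> ereal) (i : nat) : (5 <= i)%nat ->
  prodF (Gcyc N) (periodic_profile c d) i =
  prodl (map (fun j => if in_triple j ((i - 5) mod 10) then Funif (c j) else 1) (seq 0 5)).
Proof.
  intros Hi. rewrite prodF_periodic. unfold Gadj. rewrite ltb_5_false by lia.
  set (r := ((i - 5) mod 10)%nat). simpl. unfold periodic_profile. simpl. rewrite !Rmult_1_r, pow1. ring.
Qed.

Lemma revenue_periodic (N : nat) (p : R) (c d : nat -> ereal) :
  revenue (Gcyc N) (uniform_price p) (periodic_profile c d) =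
  suml (map (fun i => p * (1 - Funif (c i))) (seq 0 5)) +
  INR N * suml (map (fun r => p * (1 - Funif (d r))) (seq 0 10)).
Proof.
  unfold revenue, uniform_price. change (fold_right Rplus 0 ?l) with (suml l).
  rewrite vertices_split, map_app, suml_app, suml_periodic.
  - (* on the 15 representative vertices the profile evaluates to c and d *)
    reflexivity.
  - intros j Hj. rewrite periodic_profile_periodic by lia. reflexivity.
Qed.

Lemma periodic_equilibrium (N : nat) (p : R) (c d : nat -> ereal) :
  (forall i, (i < 5)%nat -> ereal_nonneg (c i) /\
     c i = ediv p (prodl (map (fun j => if cyc_adj i j then Funif (c j) else 1) (seq 0 5)) *
                   prodl (map (fun r => if in_triple i r then Funif (d r) else 1) (seq 0 10)) ^ N)) ->
  (forall r, (r < 10)%nat -> ereal_nonneg (d r) /\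
     d r = ediv p (prodl (map (fun j => if in_triple j r then Funif (c j) else 1) (seq 0 5)))) ->
  is_equilibrium (Gcyc N) (uniform_price p) (periodic_profile c d).
Proof.
  intros Hc Hd i _. unfold uniform_price.
  destruct (le_lt_dec 5 i) as [Hi|Hi].
  - rewrite prodF_new_vertex by lia. unfold periodic_profile. rewrite ltb_5_false by lia.
    apply Hd, Nat.mod_upper_bound; lia.
  - rewrite prodF_cycle_vertex by lia. unfold periodic_profile.
    rewrite (proj2 (Nat.ltb_lt i 5)) by lia. apply Hc; lia.
Qed.

Lemma ediv_pos (c d : R) : 0 < d -> ediv c d = Fin (c / d).
Proof. intros H. unfold ediv. destruct (Req_EM_T d 0); [lra|auto]. Qed.

Lemma Funif_le1 (x : R) : x <= 1 -> Funif (Fin x) = x.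
Proof. apply Rmin_right. Qed.

Lemma Funif_ge1 (x : R) : 1 <= x -> Funif (Fin x) = 1.
Proof. apply Rmin_left. Qed.

Lemma inv_ge1 (x : R) : 0 < x <= 1 -> 1 <= / x.
Proof. intros H. rewrite <- Rinv_1 at 1. apply Rinv_le_contravar; lra. Qed.

Ltac solve_fixed_point :=
  rewrite ?Rmult_1_l, ?Rmult_1_r, ?pow1;
  split; [simpl; lra|];
  rewrite ediv_pos by (repeat apply Rmult_lt_0_compat; try apply pow_lt; lra);
  f_equal; field; lra.

Definition cycle_equilibrium (q : R) : nat -> ereal :=
  periodic_profile (fun _ => Fin q) (fun _ => Fin 1).

Lemma cycle_equilibrium_is_equilibrium (N : nat) (q : R) : 0 < q < 1 ->
  is_equilibrium (Gcyc N) (uniform_price (q * q * q)) (cycle_equilibrium q).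
Proof.
  intros Hq. assert (F1 : Funif (Fin 1) = 1) by (apply Funif_ge1; lra).
  assert (Fq : Funif (Fin q) = q) by (apply Funif_le1; lra).
  apply periodic_equilibrium; intros i Hi.
  - destruct i as [|[|[|[|[|i]]]]]; [..|lia]; cbn -[Funif]; rewrite F1, Fq;
      solve_fixed_point.
  - destruct i as [|[|[|[|[|[|[|[|[|[|i]]]]]]]]]]; [..|lia]; cbn -[Funif]; rewrite Fq;
      solve_fixed_point.
Qed.

Lemma cycle_equilibrium_revenue (N : nat) (q : R) : 0 < q < 1 ->
  revenue (Gcyc N) (uniform_price (q * q * q)) (cycle_equilibrium q) = 5 * (q * q * q) * (1 - q).
Proof.
  intros Hq. unfold cycle_equilibrium. rewrite revenue_periodic. cbn -[Funif].
  rewrite (Funif_ge1 1), (Funif_le1 q) by lra. ring.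
Qed.

(* Buyers: cycle vertices 0, 2 and the new vertices of triple
   8 = {1,3,4}, all at threshold p.  Cycle vertex 1 sees the N buying new
   vertices of {1,3,4}, vertices 3 and 4 see them too, so their thresholds
   p / p^(N+1) and p / p^N are >= 1; new vertices of the triples through 0 and 2
   only (triples 0, 3, 4) see one or two buyers and get threshold >= 1. *)
Definition cycle_thresholds (N : nat) (p : R) (j : nat) : ereal :=
  match j with
  | 0%nat | 2%nat => Fin p
  | 1%nat => Fin (/ (p * p ^ N))
  | _ => Fin (/ p ^ N)
  end.

Definition triple_thresholds (p : R) (r : nat) : ereal :=
  match r with
  | 0%nat | 3%nat | 4%nat => Fin (/ p)
  | 8%nat => Fin p
  | _ => Fin 1
  end.

Definition triple_equilibrium (N : nat) (p : R) : nat -> ereal :=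
  periodic_profile (cycle_thresholds N p) (triple_thresholds p).

Lemma triple_equilibrium_cdf (N : nat) (p : R) : 0 < p < 1 ->
  0 < p ^ N <= 1 /\ Funif (Fin 1) = 1 /\ Funif (Fin p) = p /\ Funif (Fin (/ p)) = 1 /\
  Funif (Fin (/ p ^ N)) = 1 /\ Funif (Fin (/ (p * p ^ N))) = 1.
Proof.
  intros Hp.
  assert (HN : 0 < p ^ N <= 1) by (split; [apply pow_lt; lra|rewrite <- (pow1 N); apply pow_incr; lra]).
  repeat split; try lra; try (apply Funif_ge1; lra); try (apply Funif_le1; lra);
    apply Funif_ge1, inv_ge1; nra.
Qed.

Lemma triple_equilibrium_is_equilibrium (N : nat) (p : R) : 0 < p < 1 ->
  is_equilibrium (Gcyc N) (uniform_price p) (triple_equilibrium N p).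
Proof.
  intros Hp. destruct (triple_equilibrium_cdf N p Hp) as (HN & F1 & Fp & Fi & FiN & FiN1).
  assert (0 < / p ^ N) by (apply Rinv_0_lt_compat; lra).
  assert (0 < / (p * p ^ N)) by (apply Rinv_0_lt_compat; nra).
  assert (0 < / p) by (apply Rinv_0_lt_compat; lra).
  apply periodic_equilibrium; intros i Hi.
  - destruct i as [|[|[|[|[|i]]]]]; [..|lia]; cbn -[Funif];
      rewrite ?F1, ?Fp, ?Fi, ?FiN, ?FiN1; solve_fixed_point.
  - destruct i as [|[|[|[|[|[|[|[|[|[|i]]]]]]]]]]; [..|lia]; cbn -[Funif];
      rewrite ?F1, ?Fp, ?Fi, ?FiN, ?FiN1; solve_fixed_point.
Qed.

Lemma triple_equilibrium_revenue (N : nat) (p : R) : 0 < p < 1 ->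
  revenue (Gcyc N) (uniform_price p) (triple_equilibrium N p) = (INR N + 2) * p * (1 - p).
Proof.
  intros Hp. destruct (triple_equilibrium_cdf N p Hp) as (_ & F1 & Fp & Fi & FiN & FiN1).
  unfold triple_equilibrium. rewrite revenue_periodic. cbn -[Funif].
  rewrite F1, Fp, Fi, FiN, FiN1. ring.
Qed.

Lemma cube_root (p : R) : 0 < p < 1 ->
  0 < Rpower p (1/3) < 1 /\ Rpower p (1/3) * Rpower p (1/3) * Rpower p (1/3) = p.
Proof.
  intros Hp. split.
  - assert (ln p < 0) by (rewrite <- ln_1; apply ln_increasing; lra).
    unfold Rpower. split; [apply exp_pos|]. rewrite <- exp_0 at 2. apply exp_increasing. lra.
  - assert (E : Rpower (Rpower p (1/3)) (INR 3) = Rpower p (1/3) ^ 3)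
      by (apply Rpower_pow, exp_pos).
    rewrite Rpower_mult in E. replace (1/3 * INR 3) with 1 in E by (simpl; field).
    rewrite Rpower_1 in E by lra. simpl in E. lra.
Qed.

Lemma low_revenue_equilibrium (N : nat) (p : R) : 0 < p < 1 ->
  is_equilibrium (Gcyc N) (uniform_price p) (cycle_equilibrium (Rpower p (1/3))) /\
  revenue (Gcyc N) (uniform_price p) (cycle_equilibrium (Rpower p (1/3))) =
    5 * p * (1 - Rpower p (1/3)).
Proof.
  intros Hp. destruct (cube_root p Hp) as [Hq Hq3].
  pose proof (cycle_equilibrium_is_equilibrium N _ Hq) as Heq.
  pose proof (cycle_equilibrium_revenue N _ Hq) as Hrev.
  rewrite Hq3 in Heq, Hrev. auto.
Qed.

Lemma revenue_ratio_bound (N : nat) (p q : R) : 0 < p < 1 -> 0 < q < 1 ->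
  (INR N + 2) * p * (1 - p) >= (1 - p) / (75 * (1 - q)) * INR (10 * N + 5) * (5 * p * (1 - q)).
Proof.
  intros Hp Hq. rewrite plus_INR, mult_INR. simpl (INR 10). simpl (INR 5).
  replace ((1 - p) / (75 * (1 - q)) * ((1 + 1 + 1 + 1 + 1 + 1 + 1 + 1 + 1 + 1) * INR N +
            (1 + 1 + 1 + 1 + 1)) * (5 * p * (1 - q)))
    with ((1 - p) * p * (10 * INR N + 5) / 15) by (field; lra).
  pose proof (pos_INR N). assert (0 < (1 - p) * p) by nra. nra.
Qed.

Theorem mainTheorem16 :
  (forall (N : nat) (p : R), (1 <= N)%nat -> 0 < p < 1 ->
     (exists T, is_equilibrium (Gcyc N) (uniform_price p) T /\
        revenue (Gcyc N) (uniform_price p) T = 5 * p * (1 - Rpower p (1/3))) /\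
     (exists T, is_equilibrium (Gcyc N) (uniform_price p) T /\
        revenue (Gcyc N) (uniform_price p) T = (INR N + 2) * p * (1 - p)))
  /\
  (forall p : R, 0 < p < 1 ->
     exists c : R, 0 < c /\
       forall N : nat, (1 <= N)%nat ->
         exists T1 T2,
           is_equilibrium (Gcyc N) (uniform_price p) T1 /\
           is_equilibrium (Gcyc N) (uniform_price p) T2 /\
           0 < revenue (Gcyc N) (uniform_price p) T2 /\
           revenue (Gcyc N) (uniform_price p) T1 >=
             c * INR (nv (Gcyc N)) * revenue (Gcyc N) (uniform_price p) T2).
Proof.
  split.
  - intros N p _ Hp. split.
    + eexists; apply low_revenue_equilibrium; auto.
    + exists (triple_equilibrium N p). split.
      * apply triple_equilibrium_is_equilibrium; auto.
      * apply triple_equilibrium_revenue; auto.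
  - intros p Hp. destruct (cube_root p Hp) as [Hq _].
    exists ((1 - p) / (75 * (1 - Rpower p (1/3)))). split; [apply Rdiv_lt_0_compat; lra|].
    intros N _. exists (triple_equilibrium N p), (cycle_equilibrium (Rpower p (1/3))).
    destruct (low_revenue_equilibrium N p Hp) as [HeqA HrevA].
    rewrite HrevA, triple_equilibrium_revenue by auto.
    split; [apply triple_equilibrium_is_equilibrium; auto|].
    split; [exact HeqA|].
    split; [apply Rmult_lt_0_compat; lra|].
    apply revenue_ratio_bound; auto.
Qed.
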